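(* Let $G$ act properly on the Borel space $S$ such that the stabilizer $G_{s,s}=\{g\in G:gs=s\}$ is locally closed in $G$ (the intersection of an open and a closed set) for every $s\in S$. Then $G_{s,s}$ is compact for every $s\in S$.
   Context: $G$ is a locally compact second countable Hausdorff group with left Haar measure $\lambda$. $S$ is a Borel space, $G$ acts measurably on $S$, and the action is proper: with $\mu_s$ the image of $\lambda$ under $g\mapsto gs$, there is a measurable partition $B_1,B_2,\dots$ of $S$ such that $\mu_s(B_n)<\infty$ for all $s\in S$, $n\in\mathbb N$. *)

From HB Require Import structures.
From mathcomp Require Import all_boot all_order all_algebra.
From mathcomp Require Import all_classical all_reals all_analysis.
Set Implicit Arguments. Unset Strict Implicit. Unset Printing Implicit Defensive.
Import Order.TTheory GRing.Theory Num.Theory.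
Local Open Scope classical_set_scope.
Local Open Scope ereal_scope.

Definition is_group (G : Type) (mul : G -> G -> G) (inv : G -> G) (e : G) :=
  [/\ (forall x y z, mul x (mul y z) = mul (mul x y) z),
      (forall x, mul e x = x /\ mul x e = x) &
      (forall x, mul (inv x) x = e /\ mul x (inv x) = e)].

Definition topological_group (G : topologicalType) (mul : G -> G -> G)
    (inv : G -> G) (e : G) :=
  [/\ is_group mul inv e,
      continuous (fun p : G * G => mul p.1 p.2) &
      continuous inv].

Definition Borel (G : ptopologicalType) := g_sigma_algebraType (@open G).

(* A left Haar measure on the Borel sets of G: a nonzero left-invariant
   Borel measure, finite on compacts and positive on nonempty open sets
   (for lcsc Hausdorff groups such a measure is automatically regular). *)
Definition left_Haar_measure (R : realType) (G : ptopologicalType)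
    (mul : G -> G -> G) (lam : set (Borel G) -> \bar R) :=
  [/\ (forall (g : G) (A : set (Borel G)), measurable A ->
         lam [set mul g x | x in A] = lam A),
      (forall K : set G, compact K -> lam K < +oo) &
      (forall U : set G, open U -> U !=set0 -> 0 < lam U)].

(* Borel space in Kallenberg's sense: Borel isomorphic to a Borel subset
   of [0,1]. *)
Definition borel_space (R : realType) (d : measure_display)
    (S : measurableType d) :=
  exists f : S -> R,
    [/\ injective f, measurable_fun setT f,
        measurable (range f), range f `<=` `[0%R, 1%R] &
        (forall A : set S, measurable A -> measurable (f @` A))].

Definition measurable_action (G : ptopologicalType) (mul : G -> G -> G)
    (e : G) (d : measure_display) (S : measurableType d) (act : G -> S -> S) :=
  [/\ (forall s, act e s = s),
      (forall g h s, act (mul g h) s = act g (act h s)) &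
      measurable_fun setT (fun p : (Borel G * S)%type => act p.1 p.2)].

Definition orbit_measure (R : realType) (G : ptopologicalType)
    (d : measure_display) (S : measurableType d)
    (lam : set (Borel G) -> \bar R) (act : G -> S -> S) (s : S) :
    set S -> \bar R :=
  fun B => lam ((fun g : G => act g s) @^-1` B).

Definition proper_action (R : realType) (G : ptopologicalType)
    (d : measure_display) (S : measurableType d)
    (lam : set (Borel G) -> \bar R) (act : G -> S -> S) :=
  exists B : nat -> set S,
    [/\ (forall n, measurable (B n)),
        trivIset setT B,
        \bigcup_n B n = setT &
        (forall s n, orbit_measure lam act s (B n) < +oo)].

Definition stabilizer (G : Type) (S : Type) (act : G -> S -> S) (s : S) :
  set G := [set g | act g s = s].

Definition locally_closed (T : topologicalType) (A : set T) :=
  exists U C : set T, [/\ open U, closed C & A = U `&` C].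

(* The stabilizer [H] of [s] is a subgroup, and a locally closed subgroup of a
   topological group is closed.  Suppose [H] is not compact.  For each cell [B]
   of the partition, [A = {g | g s \in B}] is right [H]-invariant and all its
   right translates [A x^{-1} = {g | g (x s) \in B}] have finite Haar measure.
   Such a set is null: otherwise pick a piece [C] of [A] of positive measure in
   a compact [K], and [h_i \in H] with the [K h_i] pairwise disjoint (possible
   since [H] is closed and not compact).  By Fubini,
   [lam C * lam (A x^{-1}) = lam A * lam (C x^{-1})] for almost every [x], so for
   a generic [x] the sets [C h_i x^{-1}] are infinitely many disjoint subsets of
   [A x^{-1}] of the same positive measure.  As the cells cover [S], [G] itself
   would be null. *)

From HB Require Import structures.
From mathcomp Require Import all_boot all_order all_algebra.
From mathcomp Require Import all_classical all_reals all_analysis.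
From mathcomp Require Import measurable_realfun.
Import Order.TTheory GRing.Theory Num.Theory.
Local Open Scope classical_set_scope.
Local Open Scope ereal_scope.
Set Implicit Arguments. Unset Strict Implicit.

Module Grp.
Section Laws.
Variables (G : Type) (mul : G -> G -> G) (inv : G -> G) (e : G).
Hypothesis Hg : is_group mul inv e.

Lemma mulgA x y z : mul x (mul y z) = mul (mul x y) z.
Proof. by case: Hg. Qed.
Lemma mul1g x : mul e x = x. Proof. by case: Hg => _ /(_ x) []. Qed.
Lemma mulg1 x : mul x e = x. Proof. by case: Hg => _ /(_ x) []. Qed.
Lemma mulVg x : mul (inv x) x = e. Proof. by case: Hg => _ _ /(_ x) []. Qed.
Lemma mulgV x : mul x (inv x) = e. Proof. by case: Hg => _ _ /(_ x) []. Qed.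
Lemma mulKg x y : mul (inv x) (mul x y) = y.
Proof. by rewrite mulgA mulVg mul1g. Qed.
Lemma mulVKg x y : mul x (mul (inv x) y) = y.
Proof. by rewrite mulgA mulgV mul1g. Qed.
Lemma invg_unique x y : mul x y = e -> x = inv y.
Proof. by move=> xy; rewrite -[x]mulg1 -(mulgV y) mulgA xy mul1g. Qed.
Lemma invgK x : inv (inv x) = x.
Proof. by apply/esym/invg_unique; rewrite mulgV. Qed.
Lemma invMg x y : inv (mul x y) = mul (inv y) (inv x).
Proof. by apply/esym/invg_unique; rewrite -mulgA mulKg mulVg. Qed.

End Laws.
End Grp.

Section TopologicalGroup.
Variables (G : ptopologicalType) (mul : G -> G -> G) (inv : G -> G) (e : G).
Hypothesis HG : topological_group mul inv e.

Lemma tgrp_group : is_group mul inv e. Proof. by case: HG. Qed.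
Lemma tgrp_continuous_inv : continuous inv. Proof. by case: HG. Qed.

Lemma tgrp_continuous_mul (T : topologicalType) (f g : T -> G) :
  continuous f -> continuous g -> continuous (fun x => mul (f x) (g x)).
Proof.
move=> cf cg x; apply: continuous2_cvg (cf x) (cg x).
by case: HG => _ /(_ (f x, g x)).
Qed.

Lemma tgrp_continuous_mull a : continuous (mul a).
Proof.
by move=> x; apply: (@tgrp_continuous_mul G (fun=> a) id _ _ x) => y;
  [exact: cvg_cst|exact: cvg_id].
Qed.

Lemma tgrp_continuous_mulr a : continuous (mul^~ a).
Proof.
by move=> x; apply: (@tgrp_continuous_mul G id (fun=> a) _ _ x) => y;
  [exact: cvg_id|exact: cvg_cst].
Qed.

Lemma compact_preimage_inv (K : set G) : compact K -> compact [set y | K (inv y)].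
Proof.
move=> cK; have gg := tgrp_group.
have -> : [set y | K (inv y)] = inv @` K.
  apply/seteqP; split => [y Ky|_ [x Kx <-]]; last by rewrite /= (Grp.invgK gg).
  by exists (inv y); rewrite ?(Grp.invgK gg).
exact/continuous_compact/cK/continuous_subspaceT/tgrp_continuous_inv.
Qed.

Lemma locally_closed_subgroup_closed (H : set G) :
  H e -> (forall x y, H x -> H y -> H (mul x y)) -> (forall x, H x -> H (inv x)) ->
  locally_closed H -> closed H.
Proof.
move=> He HM HV [U [C [oU cC HUC]]]; have gg := tgrp_group.
rewrite closure_id; apply/seteqP; split=> [|x clx]; first exact: subset_closure.
(* The neighbourhood [x U^{-1}] of [x \in closure H] meets [H] at some [h], and
   then [h^{-1} x \in U \cap closure H \subseteq U \cap C = H]. *)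
pose O := [set y | U (mul (inv y) x)].
have oO : open O.
  have cO : continuous (fun y => mul (inv y) x).
    by apply: tgrp_continuous_mul tgrp_continuous_inv _ => y; exact: cvg_cst.
  exact: (continuousP _).1 cO U oU.
have Ox : O x by rewrite /O /= (Grp.mulVg gg); move: He; rewrite HUC => -[].
have [h [Hh Oh]] : H `&` O !=set0 by apply: clx; apply: open_nbhs_nbhs.
have clhx : closure H (mul (inv h) x).
  move=> B /(tgrp_continuous_mull (a := inv h)) /clx [y [Hy By]].
  by exists (mul (inv h) y); split => //; apply: HM => //; exact: HV.
have Hhx : H (mul (inv h) x).
  rewrite HUC; split => //; rewrite (closure_id C).1 //.
  by move: clhx; apply: closureS; rewrite HUC => ? [].
by rewrite -(Grp.mulVKg gg h x); apply: HM.
Qed.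

Lemma noncompact_disjoint_rtranslates (H K : set G) :
  closed H -> ~ compact H -> compact K ->
  exists h : nat -> G, (forall i, H (h i)) /\
    trivIset setT (fun i => [set w | K (mul w (inv (h i)))]).
Proof.
move=> cH ncH cK; have gg := tgrp_group.
(* [h_j] is chosen in [H] outside the compact set [\bigcup_(i < j) K^{-1} K h_i]. *)
pose KK a := [set mul (mul (inv p.1) p.2) a | p in K `*` K].
pose L (l : seq G) := \big[setU/set0]_(a <- l) KK a.
have cL l : compact (L l).
  apply: bigsetU_compact => a _; apply: continuous_compact; last exact: compact_setX.
  apply/continuous_subspaceT/tgrp_continuous_mul => [|p]; last exact: cvg_cst.
  apply: tgrp_continuous_mul => p; last exact: cvg_snd.
  apply: (continuous_comp (cvg_fst (FG:=nbhs_filter _))).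
  exact: tgrp_continuous_inv.
have ex l : exists h, H h /\ ~ L l h.
  apply/not_existsP => /= hall; apply/ncH/(subclosed_compact cH (cL l)) => x Hx.
  by have /not_andP[//|/contrapT] := hall x.
pose g l := projT1 (cid (ex l)).
have gP l : H (g l) /\ ~ L l (g l) by rewrite /g; case: cid.
pose fix hs n := if n is n'.+1 then g (hs n') :: hs n' else [::].
exists (fun n => g (hs n)); split => [i|]; first by case: (gP (hs i)).
have sub i j : (i < j)%N -> KK (g (hs i)) `<=` L (hs j).
  elim: j => // j IH; rewrite ltnS leq_eqVlt => /orP [/eqP ->|/IH ij].
    by rewrite /L /= big_cons; left.
  by rewrite /L /= big_cons; right; exact: ij.
suff disj i j w : (i < j)%N -> K (mul w (inv (g (hs i)))) ->
    K (mul w (inv (g (hs j)))) -> False.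
  move=> i j _ _ [w [Ki Kj]]; case: (ltngtP i j) => // ij.
  - by case: (disj i j w).
  - by case: (disj j i w).
move=> ij Ki Kj; case: (gP (hs j)) => _; apply; apply: (sub i j ij).
exists (mul w (inv (g (hs j))), mul w (inv (g (hs i)))) => //=.
rewrite (Grp.invMg gg) (Grp.invgK gg) -!(Grp.mulgA gg).
by rewrite (Grp.mulKg gg) (Grp.mulVg gg) (Grp.mulg1 gg).
Qed.

End TopologicalGroup.

Lemma compact_closed_cover (G : topologicalType) :
  locally_compact [set: G] -> @second_countable G -> exists K : nat -> set G,
  (forall n, compact (K n) /\ closed (K n)) /\ forall x, exists n, K n x.
Proof.
move=> Hlc [B cB [Bop Bb]]; have [f finj] := countable_injP _ cB.
(* [K n] is the closure of the basic open set of index [n], when that closure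
   is compact. *)
pose Bn n := [set b | B b /\ f b = n /\ compact (closure b)].
pose K n := [set x | exists b, Bn n b /\ closure b x].
exists K; split=> [n|x].
  have [[b0 Bb0]|nb] := pselect (exists b, Bn n b); last first.
    have -> : K n = set0 by apply/seteqP; split => // x [b [Bnb _]]; apply: nb; exists b.
    by split; [exact: compact0|exact: closed0].
  have -> : K n = closure b0.
    apply/seteqP; split => [x [b [Bnb cbx]]|x cx]; last by exists b0.
    suff <- : b = b0 by [].
    case: Bnb Bb0 => Bnb [fb _] [Bnb0 [fb0 _]].
    by apply: finj; rewrite ?inE // fb fb0.
  by split; [case: Bb0 => _ [_ h]; exact: h|exact: closed_closure].
have [U Ux [cU clU]] := Hlc x I; rewrite withinET in Ux.
have [b [Bbb bx] bU] := Bb x U Ux.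
exists (f b), b; split; last exact: subset_closure.
do 2!split => //; apply: (subclosed_compact _ cU); first exact: closed_closure.
by rewrite (closure_id U).1 //; exact: closureS.
Qed.

Section BorelSets.
Variable G : ptopologicalType.
Local Notation BG := (Borel G).

Lemma Borel_open (U : set G) : open U -> measurable (U : set BG).
Proof. exact: sub_sigma_algebra. Qed.

Lemma Borel_closed (C : set G) : closed C -> measurable (C : set BG).
Proof.
by move=> cC; rewrite -[C]setCK; apply: measurableC; apply: Borel_open; rewrite openC.
Qed.

Lemma Borel_preimage (f : G -> G) (A : set G) : continuous f ->
  measurable (A : set BG) -> measurable ([set x | A (f x)] : set BG).
Proof.
move=> cf mA; have mf : measurable_fun setT (f : BG -> BG).
  apply: (@measurability _ _ BG BG setT f open) => // _ [B oB <-].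
  apply: measurableI => //.
  by apply: Borel_open; exact: (continuousP _).1 cf _ oB.
by have := mf measurableT A mA; rewrite setTI.
Qed.

Hypothesis Hsc : @second_countable G.

(* Second countability makes every open set of [G * G] a countable union of
   open rectangles. *)
Lemma Borel_open_prod (W : set (G * G)) : open W -> measurable (W : set (BG * BG)).
Proof.
move=> oW; case: Hsc => B cB [Bop Bb]; have [f finj] := countable_injP _ cB.
pose P n m b1 b2 := [/\ B b1, B b2, f b1 = n, f b2 = m & b1 `*` b2 `<=` W].
pose Rnm n m := [set p : G * G | exists b1 b2, P n m b1 b2 /\ b1 p.1 /\ b2 p.2].
have -> : W = \bigcup_n \bigcup_m Rnm n m.
  apply/seteqP; split=> [p Wp|p [n _ [m _ [b1 [b2 [[_ _ _ _ sW] p12]]]]]]; last exact: sW.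
  have [[Q1 Q2] /= [nQ1 nQ2] sQ] : nbhs p W by move: oW; rewrite openE; exact.
  have [b1 [Bb1 b1p] b1Q] := Bb p.1 Q1 nQ1.
  have [b2 [Bb2 b2p] b2Q] := Bb p.2 Q2 nQ2.
  exists (f b1) => //; exists (f b2) => //; exists b1, b2; do 2!split => //.
  by move=> q [/b1Q ? /b2Q ?]; exact: sQ.
apply: bigcupT_measurable => n; apply: bigcupT_measurable => m.
have [[b1 [b2 Pb]]|nb] := pselect (exists b1 b2, P n m b1 b2); last first.
  suff -> : Rnm n m = set0 by [].
  by apply/seteqP; split => // p [b1 [b2 [Pb _]]]; apply: nb; exists b1, b2.
have -> : Rnm n m = b1 `*` b2.
  apply/seteqP; split => [p [c1 [c2 [Pc p12]]]|p p12]; last by exists b1, b2.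
  case: Pb Pc => Bb1 Bb2 fb1 fb2 _ [Bc1 Bc2 fc1 fc2 _].
  have <- : c1 = b1 by apply: finj; rewrite ?inE // fb1 fc1.
  have <- : c2 = b2 by apply: finj; rewrite ?inE // fb2 fc2.
  exact: p12.
by case: Pb => Bb1 Bb2 _ _ _; apply: measurableX; apply: Borel_open; exact: Bop.
Qed.

Lemma Borel_preimage2 (f : G * G -> G) (A : set G) : continuous f ->
  measurable (A : set BG) -> measurable ([set p | A (f p)] : set (BG * BG)).
Proof.
move=> cf mA; have mf : measurable_fun setT (f : BG * BG -> BG).
  apply: (@measurability _ _ (BG * BG)%type BG setT f open) => // _ [U oU <-].
  apply: measurableI => //.
  by apply: Borel_open_prod; exact: (continuousP _).1 cf _ oU.
by have := mf measurableT A mA; rewrite setTI.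
Qed.

End BorelSets.

Lemma Haar_sigma_finite (R : realType) (G : ptopologicalType) (mul : G -> G -> G)
    (lam : measure (Borel G) R) :
  locally_compact [set: G] -> @second_countable G -> left_Haar_measure mul lam ->
  sigma_finite setT lam.
Proof.
move=> Hlc Hsc [_ Hcpt _]; have [K [cK covK]] := compact_closed_cover Hlc Hsc.
exists K; first by apply/seteqP; split => x // _; have [n Kn] := covK x; exists n.
by move=> n; case: (cK n) => cpt cl; split; [exact: Borel_closed|exact: Hcpt].
Qed.

Section MeasureFacts.
Variables (d : measure_display) (T : measurableType d) (R : realType).
Variable mu : measure T R.

Lemma measure_pos_cover (A : set T) (F : nat -> set T) :
  measurable A -> (forall n, measurable (F n)) -> A `<=` \bigcup_n F n ->
  0 < mu A -> exists n, 0 < mu (A `&` F n).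
Proof.
move=> mA mF AF Apos; apply: contrapT => /forallNP null.
have : mu A <= \sum_(n <oo) mu (A `&` F n).
  apply: measure_sigma_subadditive => // [n|x Ax]; first exact: measurableI.
  by have [n _ Fx] := AF x Ax; exists n.
rewrite eseries0 => [|n _ _]; first by rewrite leNgt Apos.
by apply/eqP; rewrite eq_le measure_ge0 andbT leNgt; apply/negP; exact: null.
Qed.

Lemma trivIset_measure_const_eq0 (E : set T) (D : nat -> set T) :
  measurable E -> mu E < +oo -> (forall i, measurable (D i)) ->
  trivIset setT D -> (forall i, D i `<=` E) ->
  (forall i, mu (D i) = mu (D 0%N)) -> mu (D 0%N) = 0.
Proof.
move=> mE Efin mD tD DE Dc.
have Efin' : mu E \is a fin_num by rewrite ge0_fin_numE ?measure_ge0.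
have cfin : mu (D 0%N) \is a fin_num.
  by rewrite ge0_fin_numE ?measure_ge0 // (le_lt_trans _ Efin) // le_measure ?inE.
set c := fine (mu (D 0%N)); set M := fine (mu E).
have le_k k : (k%:R * c <= M)%R.
  rewrite -lee_fin /M fineK //.
  have -> : (k%:R * c)%:E = \sum_(i < k) mu (D i).
    under eq_bigr do rewrite Dc.
    by rewrite -[in RHS](fineK cfin) sumEFin sumr_const card_ord mulr_natl.
  rewrite -measure_bigsetU //; apply: le_measure; rewrite ?inE //.
  - exact: bigsetU_measurable.
  - by move=> x /(@bigsetU_bigcup _ D k x) [i _ /DE].
apply/eqP; rewrite -(fineK cfin) eqe -/c eq_le fine_ge0 ?measure_ge0 // andbT.
rewrite leNgt; apply/negP => c0.
have := truncnS_gt (M / c); rewrite ltr_pdivrMr //.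
by rewrite ltNge le_k.
Qed.

End MeasureFacts.

(* [rtranslate mul E x] is the right translate [E x^{-1}]. *)
Definition rtranslate (G : Type) (mul : G -> G -> G) (E : set G) (x : G) : set G :=
  [set y | E (mul y x)].

Section RightTranslates.
Variables (G : Type) (mul : G -> G -> G) (inv : G -> G) (e : G).
Hypothesis Hg : is_group mul inv e.

Lemma rtranslate1 (E : set G) : rtranslate mul E e = E.
Proof. by apply/seteqP; split => y; rewrite /rtranslate /= (Grp.mulg1 Hg). Qed.

Lemma rtranslateM (E : set G) x y :
  rtranslate mul E (mul x y) = rtranslate mul (rtranslate mul E y) x.
Proof. by apply/seteqP; split => z; rewrite /rtranslate /= (Grp.mulgA Hg). Qed.

End RightTranslates.

Section HaarMeasure.
Variables (R : realType) (G : ptopologicalType).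
Variables (mul : G -> G -> G) (inv : G -> G) (e : G).
Hypothesis HG : topological_group mul inv e.
Hypothesis Hlc : locally_compact [set: G].
Hypothesis Hsc : @second_countable G.
Variable lam : measure (Borel G) R.
Hypothesis Hlam : left_Haar_measure mul lam.
Hypothesis Hsf : sigma_finite setT lam.
Local Notation BG := (Borel G).
Local Notation rtranslate := (@rtranslate BG mul).

Let gg := tgrp_group HG.
Let cont_fst : continuous (fun p : G * G => p.1). Proof. by move=> p; exact: cvg_fst. Qed.
Let cont_snd : continuous (fun p : G * G => p.2). Proof. by move=> p; exact: cvg_snd. Qed.
Let cont_mul_swap : continuous (fun p : G * G => mul p.2 p.1).
Proof. by apply: (tgrp_continuous_mul HG); [exact: cont_snd|exact: cont_fst]. Qed.

(* A copy of [lam] carrying its sigma-finiteness, as Fubini's theorem requires. *)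
Definition lamS := (lam : set BG -> \bar R).
HB.instance Definition _ := Measure.on lamS.
HB.instance Definition _ := Measure_isSigmaFinite.Build _ _ _ lamS Hsf.

Lemma Haar_setT_gt0 : 0 < lam setT.
Proof. by case: Hlam => _ _; apply; [exact: openT|exists point]. Qed.

Lemma Haar_preimage_mull x (A : set BG) : measurable A ->
  lam [set y | A (mul x y)] = lam A.
Proof.
move=> mA; case: Hlam => Hi _ _; rewrite -(Hi (inv x) A mA).
congr (lam _); apply/seteqP; split=> [y Ay|_ [z Az <-]]; last by rewrite /= (Grp.mulVKg gg).
by exists (mul x y); rewrite ?(Grp.mulKg gg).
Qed.

Lemma measurable_rtranslate (E : set BG) x :
  measurable E -> measurable (rtranslate E x : set BG).
Proof. exact: Borel_preimage (tgrp_continuous_mulr HG (a := x)). Qed.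

Lemma measurable_fun_rtranslate (E : set BG) : measurable E ->
  measurable_fun setT (fun x : BG => lamS (rtranslate E x) : \bar R).
Proof.
move=> mE; pose D := [set p : BG * BG | E (mul p.2 p.1)].
have -> : (fun x => lamS (rtranslate E x)) = lamS \o xsection D.
  apply/funext => x /=; congr (lamS _).
  by apply/seteqP; split => y; rewrite /xsection /= inE.
exact: measurable_fun_xsection (Borel_preimage2 Hsc cont_mul_swap mE).
Qed.

(* Both sides are the [lam \x lam]-measure of [{(x, y) | x \in W, y x \in E}],
   computed by Fubini after the change of variables [y |-> y x]. *)
Lemma integral_rtranslate (E W : set BG) : measurable E -> measurable W ->
  \int[lamS]_(x in W) lamS (rtranslate E x) = lamS E * lamS [set y | W (inv y)].
Proof.
move=> mE mW.
pose D := [set p : BG * BG | W p.1 /\ E (mul p.2 p.1)].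
have mD : measurable D.
  apply: measurableI; first exact: (Borel_preimage2 Hsc cont_fst mW).
  exact: (Borel_preimage2 Hsc cont_mul_swap mE).
pose D' := [set p : BG * BG | W (mul (inv p.1) p.2) /\ E p.2].
have cdiv : continuous (fun p : G * G => mul (inv p.1) p.2).
  apply: (tgrp_continuous_mul HG); last exact: cont_snd.
  move=> p; apply: (continuous_comp (cvg_fst (FG:=nbhs_filter _))).
  exact: (tgrp_continuous_inv HG).
have mD' : measurable D'.
  apply: measurableI; first exact: (Borel_preimage2 Hsc cdiv mW).
  exact: (Borel_preimage2 Hsc cont_snd mE).
have T1 := indic_fubini_tonelli lamS lamS mD.
rewrite indic_fubini_tonelli_FE // indic_fubini_tonelli_GE // in T1.
have T2 := indic_fubini_tonelli lamS lamS mD'.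
rewrite indic_fubini_tonelli_FE // indic_fubini_tonelli_GE // in T2.
have e1 : \int[lamS]_(x in W) lamS (rtranslate E x) = \int[lamS]_x (lamS \o xsection D) x.
  rewrite integral_mkcond; apply: eq_integral => x _ /=; rewrite /patch.
  case: ifPn => Wx.
    congr (lamS _); apply/seteqP; split => y; rewrite /xsection /rtranslate /= inE /D //=.
    - by move=> Ey; split => //; move: Wx; rewrite inE.
    - by case.
  transitivity (lamS set0); first by rewrite measure0.
  congr (lamS _); apply/seteqP; split => y //.
  by rewrite /xsection /= inE /D /= => -[Wx' _]; move: Wx; rewrite notin_setE.
(* The [y]-section of [D] is [y^{-1}] times the [y]-th [x]-section of [D']. *)
have e2 : lamS \o ysection D = lamS \o xsection D'.
  apply/funext => y /=.
  have -> : ysection D y = [set x | [set z | W (mul (inv y) z) /\ E z] (mul y x)].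
    by apply/seteqP; split => x; rewrite /ysection /= inE /D /= (Grp.mulKg gg).
  rewrite /lamS Haar_preimage_mull; last first.
    apply: measurableI mE.
    by have := Borel_preimage (tgrp_continuous_mull HG (a := inv y)) mW.
  by congr (lam _); apply/seteqP; split => z; rewrite /xsection /= inE.
have e3 : \int[lamS]_z (lamS \o ysection D') z =
          \int[lamS]_(z in E) (cst (lamS [set y | W (inv y)])) z.
  rewrite [RHS]integral_mkcond; apply: eq_integral => z _ /=; rewrite /patch.
  case: ifPn => Ez.
    have -> : ysection D' z = [set y | [set u | W (inv u)] (mul (inv z) y)].
      apply/seteqP; split => y;
        rewrite /ysection /= inE /D' /= (Grp.invMg gg) (Grp.invgK gg).
        by case.
      by move=> Wy; split => //; move: Ez; rewrite inE.
    rewrite /lamS Haar_preimage_mull //.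
    exact: Borel_preimage (tgrp_continuous_inv HG) mW.
  transitivity (lamS set0); last by rewrite measure0.
  congr (lamS _); apply/seteqP; split => y //.
  by rewrite /ysection /= inE /D' /= => -[_ Ez']; move: Ez; rewrite notin_setE.
by rewrite e1 T1 e2 T2 e3 integral_cst // muleC.
Qed.

Lemma Haar_null_inv (N : set BG) : measurable N -> lam N = 0 ->
  lam [set y | N (inv y)] = 0.
Proof.
move=> mN N0; have := integral_rtranslate measurableT mN.
rewrite null_set_integral //; last first.
  exact: measurable_funTS (measurable_fun_rtranslate measurableT).
move=> /esym/eqP; rewrite mule_eq0 => /orP[/eqP T0|/eqP //].
by move: Haar_setT_gt0; rewrite /lamS in T0; rewrite T0 ltxx.
Qed.

Lemma Haar_null_rtranslate (N : set BG) x : measurable N -> lam N = 0 ->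
  lam (rtranslate N x) = 0.
Proof.
move=> mN N0; pose NV := [set y | N (inv y)]; pose xNV := [set y | NV (mul (inv x) y)].
have mNV : measurable (NV : set BG) by exact: Borel_preimage (tgrp_continuous_inv HG) mN.
have mxNV : measurable (xNV : set BG).
  exact: Borel_preimage (tgrp_continuous_mull HG (a := inv x)) mNV.
have xNV0 : lam xNV = 0 by rewrite Haar_preimage_mull // Haar_null_inv.
(* [N x^{-1}] is the inverse of the left translate [x^{-1} N^{-1}] *)
have := Haar_null_inv mxNV xNV0; congr (lam _ = _); apply/seteqP; split => y;
  by rewrite /rtranslate /xNV /NV /= (Grp.invMg gg) !(Grp.invgK gg).
Qed.

Lemma Haar_negligible_rtranslate (N : set BG) x : lam.-negligible N ->
  lam.-negligible (rtranslate N x).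
Proof.
move=> [A [mA A0 NA]]; exists (rtranslate A x); split => [||y /NA //].
- exact: measurable_rtranslate.
- exact: Haar_null_rtranslate.
Qed.

(* Integrating either side over a measurable [W] inside a compact set gives
   [lam E1 * lam E2 * lam W^{-1}] by [integral_rtranslate]. *)
Lemma ae_rtranslate_proportional (E1 E2 : set BG) : measurable E1 -> measurable E2 ->
  lam E1 < +oo -> lam E2 < +oo ->
  lam.-negligible
    [set x | lam E2 * lam (rtranslate E1 x) <> lam E1 * lam (rtranslate E2 x)].
Proof.
move=> mE1 mE2 f1 f2; case: Hlam => _ Hcpt _.
have [K [cK covK]] := compact_closed_cover Hlc Hsc.
pose f (x : BG) := lamS E2 * lamS (rtranslate E1 x).
pose g (x : BG) := lamS E1 * lamS (rtranslate E2 x).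
have mf : measurable_fun setT f.
  by apply: measurable_funeM; exact: measurable_fun_rtranslate.
have mg : measurable_fun setT g.
  by apply: measurable_funeM; exact: measurable_fun_rtranslate.
have intE (W E : set BG) c : measurable W -> measurable E -> 0 <= c ->
    \int[lamS]_(x in W) (c * lamS (rtranslate E x)) =
    c * (lamS E * lamS [set y | W (inv y)]).
  move=> mW mE c0; rewrite ge0_integralZl // ?integral_rtranslate //.
  exact: measurable_funTS (measurable_fun_rtranslate mE).
have ae_K j : lam.-negligible (~` [set x | K j x -> f x = g x]).
  have mKj : measurable (K j : set BG) by apply: Borel_closed; case: (cK j).
  apply: (integral_ae_eq mKj).
  - apply/integrableP; split; first exact: measurable_funTS.
    rewrite (eq_integral f) => [|x _]; last by rewrite gee0_abs // mule_ge0.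
    rewrite /f intE //; apply: lte_mul_pinfty => //; first by rewrite ge0_fin_numE.
    apply: lte_mul_pinfty => //; first by rewrite ge0_fin_numE.
    by apply/Hcpt/(compact_preimage_inv HG); case: (cK j).
  - exact: measurable_funTS.
  - by move=> W WK mW; rewrite /f /g !intE // !muleA (muleC (lamS E2)).
have [N [mN N0 NN]] := negligible_bigcup ae_K.
exists N; split => // x nx; apply: NN.
have [j Kj] := covK x; exists j => //= fg; exact/nx/fg.
Qed.

Lemma exists_rtranslate_pos_notin (A N : set BG) : measurable A -> 0 < lam A ->
  lam.-negligible N -> exists x, 0 < lam (rtranslate A x) /\ ~ N x.
Proof.
move=> mA Apos nN; apply: contrapT => /forallNP hx.
have Phi0 : ae_eq lamS setT (fun x => lamS (rtranslate A x)) (cst 0).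
  apply: (negligibleS _ nN) => y /= ny; apply: contrapT => Ny; apply: ny => _.
  apply/eqP; rewrite eq_le measure_ge0 andbT leNgt; apply/negP => Py; exact: (hx y).
have := ae_eq_integral (cst 0) _ measurableT (measurable_fun_rtranslate mA)
  (measurable_cst _) Phi0.
rewrite integral0 integral_rtranslate // => /eqP; rewrite mule_eq0 => /orP[/eqP|/eqP] null.
- by move: Apos; rewrite /lamS in null; rewrite null ltxx.
- by move: Haar_setT_gt0; rewrite /lamS in null; rewrite null ltxx.
Qed.

Lemma exists_generic_point (A C : set BG) (k : nat -> G) :
  measurable A -> measurable C -> 0 < lam A -> lam A < +oo -> lam C < +oo ->
  (forall i, rtranslate A (k i) = A) ->
  exists x, 0 < lam (rtranslate A x) /\ forall i,
    lam A * lam (rtranslate (rtranslate C (k i)) x) = lam C * lam (rtranslate A x).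
Proof.
move=> mA mC Apos Afin Cfin Ak.
pose N := [set x | lam C * lam (rtranslate A x) <> lam A * lam (rtranslate C x)].
pose Bad := N `|` \bigcup_i rtranslate N (k i).
have nBad : lam.-negligible Bad.
  apply: negligibleU; first exact: ae_rtranslate_proportional.
  apply: negligible_bigcup => i.
  by apply/Haar_negligible_rtranslate/ae_rtranslate_proportional.
have [x [Axpos nBx]] := exists_rtranslate_pos_notin mA Apos nBad.
exists x; split => // i.
have : ~ N (mul x (k i)) by move=> Nx; apply: nBx; right; exists i.
by rewrite /N /= !(rtranslateM gg) Ak => /contrapT ->.
Qed.

Lemma rinvariant_null (H : set G) (A : set BG) :
  closed H -> ~ compact H -> (forall h, H h -> H (inv h)) ->
  (forall h, H h -> rtranslate A h = A) -> measurable A ->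
  (forall x, lam (rtranslate A x) < +oo) -> lam A = 0.
Proof.
move=> cH ncH HV AH mA Afin; apply/eqP; apply: contraT => A0.
have Apos : 0 < lam A by rewrite lt0e A0 measure_ge0.
have Afin1 : lam A < +oo by have := Afin e; rewrite (rtranslate1 gg).
have [K [cK covK]] := compact_closed_cover Hlc Hsc.
have mK n : measurable (K n : set BG) by apply: Borel_closed; case: (cK n).
have AK : A `<=` \bigcup_n K n by move=> x _; have [n Kn] := covK x; exists n.
have [m Cpos] := measure_pos_cover mA mK AK Apos.
pose C := A `&` K m; have mC : measurable C by exact: measurableI.
have Cfin : lam C < +oo.
  by apply: le_lt_trans Afin1; apply: le_measure; rewrite ?inE // => x [].
have [h [Hh disjK]] := noncompact_disjoint_rtranslates HG cH ncH (cK m).1.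
have AhV i : rtranslate A (inv (h i)) = A := AH _ (HV _ (Hh i)).
have [x [Axpos eqD]] := exists_generic_point mA mC Apos Afin1 Cfin AhV.
pose D i := rtranslate (rtranslate C (inv (h i))) x.
have mD i : measurable (D i : set BG).
  by apply: measurable_rtranslate; exact: measurable_rtranslate.
have DA i : D i `<=` rtranslate A x.
  by rewrite -(AhV i) => y; rewrite /D /rtranslate /C /= => -[].
have Dconst i : lam (D i) = lam (D 0%N).
  have AfinE : lam A \is a fin_num by rewrite ge0_fin_numE ?measure_ge0.
  by apply/le_anti/andP; split; rewrite -(lee_pmul2l AfinE Apos) !eqD.
have tD : trivIset setT D.
  move=> i j _ _ [y [[_ Ki] [_ Kj]]]; apply: (disjK i j I I).
  by exists (mul y x); split.
have mAx : measurable (rtranslate A x : set BG) by exact: measurable_rtranslate.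
have D0 := trivIset_measure_const_eq0 mAx (Afin x) mD tD DA Dconst.
have := eqD 0%N; rewrite -/(D 0%N) D0 mule0 => /esym/eqP.
by rewrite mule_eq0 !gt_eqF.
Qed.

End HaarMeasure.

Section GroupAction.
Variables (G : ptopologicalType) (mul : G -> G -> G) (inv : G -> G) (e : G).
Variables (d : measure_display) (S : measurableType d) (act : G -> S -> S).
Hypothesis Hg : is_group mul inv e.
Hypothesis Hact : measurable_action mul e act.

Lemma stabilizer1 s : stabilizer act s e.
Proof. by case: Hact => act1 _ _; exact: act1. Qed.

Lemma stabilizerM s x y :
  stabilizer act s x -> stabilizer act s y -> stabilizer act s (mul x y).
Proof. by case: Hact => _ actM _; rewrite /stabilizer /= actM => xs ->. Qed.

Lemma stabilizerV s x : stabilizer act s x -> stabilizer act s (inv x).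
Proof.
case: Hact => act1 actM _; rewrite /stabilizer /= => xs.
by rewrite -{1}xs -actM (Grp.mulVg Hg) act1.
Qed.

Lemma measurable_orbit_preimage s (B : set S) : measurable B ->
  measurable ([set g | B (act g s)] : set (Borel G)).
Proof.
case: Hact => _ _ mact mB.
have mf : measurable_fun setT (fun g : Borel G => act g s).
  have -> : (fun g : Borel G => act g s) =
      (fun p : Borel G * S => act p.1 p.2) \o (fun g : Borel G => (g, s)) by [].
  by apply: measurableT_comp mact _; exact: measurable_fun_pair.
by have := mf measurableT B mB; rewrite setTI.
Qed.

Lemma rtranslate_orbit_preimage s (B : set S) x :
  @rtranslate (Borel G) mul [set g | B (act g s)] x = [set g | B (act g (act x s))].
Proof.
by case: Hact => _ actM _; apply/seteqP; split => g; rewrite /rtranslate /= actM.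
Qed.

End GroupAction.

Theorem corollary2p5 (R : realType) (G : ptopologicalType)
  (mul : G -> G -> G) (inv : G -> G) (e : G)
  (HG : topological_group mul inv e)
  (Hlc : locally_compact [set: G])
  (Hsc : @second_countable G)
  (Hhaus : hausdorff_space G)
  (lam : measure (Borel G) R)
  (Hlam : left_Haar_measure mul lam)
  (d : measure_display) (S : measurableType d)
  (HS : borel_space R S)
  (act : G -> S -> S)
  (Hact : measurable_action mul e act)
  (Hprop : proper_action lam act)
  (Hlcl : forall s : S, locally_closed (stabilizer act s)) :
  forall s : S, compact (stabilizer act s).
Proof.
move=> s; have gg := tgrp_group HG; have Hsf := Haar_sigma_finite Hlc Hsc Hlam.
have HV := stabilizerV gg Hact (s := s).
have cH : closed (stabilizer act s).
  apply: (locally_closed_subgroup_closed HG _ _ HV (Hlcl s)).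
  - exact: stabilizer1 Hact s.
  - exact: (stabilizerM Hact).
apply: contrapT => ncH; case: Hprop => B [mB _ covB finB].
have mBs n : measurable ([set g | B n (act g s)] : set (Borel G)) :=
  measurable_orbit_preimage Hact s (mB n).
have null n : lam [set g | B n (act g s)] = 0.
  apply: (rinvariant_null HG Hlc Hsc Hlam Hsf cH ncH HV) => [h Hh||x].
  - by rewrite (rtranslate_orbit_preimage Hact) Hh.
  - exact: mBs.
  - by rewrite (rtranslate_orbit_preimage Hact); exact: finB.
have cover : [set: Borel G] `<=` \bigcup_n [set g | B n (act g s)].
  move=> g _; have [n _ Bn] : (\bigcup_n B n) (act g s) by rewrite covB.
  by exists n.
have [n] := measure_pos_cover measurableT mBs cover (Haar_setT_gt0 Hlam).
by rewrite setTI null ltxx.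
Qed.
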